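(* Let $d\ge3$, $c\in\mathbb{Z}^+$, and $\phi_{(d,c)}(x)=x^d-cdx^{d-1}+c(d-1)$. Then the forward orbit $\{\phi_{(d,c)}^n(0):n\ge0\}$ of $0$ under $\phi_{(d,c)}$ is infinite.
   Context: $\phi^n$ denotes the $n$-fold iterate. *)

From mathcomp Require Import all_boot all_order all_algebra.
Set Implicit Arguments. Unset Strict Implicit. Unset Printing Implicit Defensive.
Import Order.TTheory GRing.Theory Num.Theory.
Local Open Scope ring_scope.

Definition phi (d : nat) (c : int) (x : int) : int :=
  x ^+ d - c * d%:R * x ^+ d.-1 + c * (d.-1)%:R.

Definition finite_orbit (f : int -> int) (x0 : int) : Prop :=
  exists s : seq int, forall n : nat, iter n f x0 \in s.

(** Write [phi x = x ^+ d.-1 * (x - c d) + c (d - 1)].  On the region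
    [x <= -2 \/ c d < x] the first term dominates, so [phi] maps the region
    into itself and strictly increases [|x|].  The orbit of [0] enters the
    region after two steps: [phi 0 = c (d - 1)] and
    [phi (c (d - 1)) = - c (c (d - 1)) ^+ d.-1 + c (d - 1) <= -2].
    From then on the iterates grow without bound, so they cannot all lie in
    a finite list. *)

From mathcomp Require Import all_boot all_order all_algebra.
From mathcomp Require Import zify ring.
Import Order.TTheory GRing.Theory Num.Theory.
Local Open Scope ring_scope.

Lemma finite_orbit_iter (m : nat) (f : int -> int) (x : int) :
  finite_orbit f x -> finite_orbit f (iter m f x).
Proof. by case=> s orbit_s; exists s => n; rewrite -iterD. Qed.

Lemma finite_orbit_bounded (f : int -> int) (x : int) :
  finite_orbit f x -> exists M : int, forall n, `|iter n f x| <= M.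
Proof.
case=> s orbit_s; exists (\big[Order.max/0]_(z <- s) `|z|) => n.
exact: le_bigmax_seq (orbit_s n) _.
Qed.

Lemma norm_expanding_not_finite_orbit (f : int -> int) (P : pred int) (x : int) :
  (forall y, P y -> P (f y) /\ `|y| < `|f y|) -> P x -> ~ finite_orbit f x.
Proof.
move=> expand Px /finite_orbit_bounded [M bounded].
have grow n : P (iter n f x) /\ n%:R <= `|iter n f x|.
  elim: n => [|n [Pn len]]; first by split.
  have [Pfn ltn] := expand _ Pn.
  by split; rewrite iterS //; lia.
have [_ len] := grow `|M|.+1.
have := bounded `|M|.+1; lia.
Qed.

Section EscapingRegion.

Variables (d : nat) (c : int).
Hypotheses (hd : (3 <= d)%N) (hc : 0 < c).

Definition escaping (x : int) : bool := (x <= -2) || (c * d%:R < x).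

Lemma phiE (x : int) : phi d c x = x ^+ d.-1 * (x - c * d%:R) + c * d.-1%:R.
Proof.
rewrite /phi -{1}(prednK (ltnW (ltnW hd))) exprS; ring.
Qed.

Lemma escaping_of_norm (y : int) : c * d%:R < `|y| -> escaping y.
Proof. rewrite /escaping; nia. Qed.

Lemma phi_norm_expanding (x : int) :
  escaping x -> c * d%:R < `|phi d c x| /\ `|x| < `|phi d c x|.
Proof.
have hD1 : d.-1%:R = d%:R - 1 :> int by lia.
rewrite phiE hD1 /escaping => /orP [xle|xgt].
- have pow_ge_sq : `|x| ^+ 2 <= `|x ^+ d.-1| by rewrite normrX ler_weXn2l //; lia.
  have dist_cd : `|x - c * d%:R| = c * d%:R - x.
    by rewrite ler0_norm ?opprB //; nia.
  have lead_ge : `|x| ^+ 2 * (c * d%:R - x) <= `|x ^+ d.-1 * (x - c * d%:R)|.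
    by rewrite normrM dist_cd ler_pM2r ?subr_gt0 //; nia.
  have sq_ge4 : 4 * (c * d%:R - x) <= `|x| ^+ 2 * (c * d%:R - x).
    by rewrite ler_wpM2r ?expr2; nia.
  have := lerB_normD (x ^+ d.-1 * (x - c * d%:R)) (c * (d%:R - 1)).
  rewrite (@ger0_norm _ (c * _)); nia.
- have pow_ge : x <= x ^+ d.-1 by rewrite -{1}(expr1 x) ler_weXn2l //; nia.
  have lead_ge : x <= x ^+ d.-1 * (x - c * d%:R) by nia.
  rewrite !ger0_norm; nia.
Qed.

Lemma phi_escaping (x : int) :
  escaping x -> escaping (phi d c x) /\ `|x| < `|phi d c x|.
Proof.
by move=> /phi_norm_expanding [gtcd gtx]; split; first exact: escaping_of_norm.
Qed.

Lemma escaping_orbit0 : escaping (iter 2 (phi d c) 0).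
Proof.
have le2e : (2 <= d.-1)%N by case: d hd => [|[|]].
set a : int := c * d.-1%:R.
have a2 : 2 <= a by rewrite /a; nia.
have phi0 : phi d c 0 = a by rewrite phiE expr0n eqn0Ngt (ltnW le2e) mul0r add0r.
have aD : a - c * d%:R = - c.
  by rewrite /a (_ : d.-1%:R = d%:R - 1 :> int) //; [ring | lia].
have ae : a ^+ 2 <= a ^+ d.-1 by rewrite ler_weXn2l //; lia.
rewrite /= phi0 phiE aD /escaping; apply/orP; left.
move: ae; rewrite expr2; nia.
Qed.

End EscapingRegion.

Theorem lemma5p1 (d : nat) (c : int) (hd : (3 <= d)%N) (hc : 0 < c) :
  ~ finite_orbit (phi d c) 0.
Proof.
move=> /(finite_orbit_iter 2).
apply: (@norm_expanding_not_finite_orbit _ (escaping d c)).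
- exact: phi_escaping.
- exact: escaping_orbit0.
Qed.
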